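(* Let $(X,d)$ be a path-connected metric space, $x_0\in X$, $n\geq1$. Then the Spanier topology on $\pi_n(X,x_0)$ is at least as fine as the topology induced by the pseudometric $\rho$.
   Context: Identify $n$-loops with based maps $(S^n,d_0)\to(X,x_0)$, uniform metric $\mu(\alpha,\beta)=\sup_t d(\alpha(t),\beta(t))$; $\rho(a,b)=\inf\{\mu(\alpha,\beta)\mid\alpha\in a,\beta\in b\}$. $\mathrm{cov}(X)$ is the set of pairs $(\mathscr{U},U_0)$ with $\mathscr{U}$ a locally finite open cover of $X$ and $U_0\in\mathscr{U}$ containing $x_0$. The Spanier group $\mathrm{Span}_n(\mathscr{U},x_0)$ is the (normal) subgroup of $\pi_n(X,x_0)$ generated by the classes $[\gamma\ast f]$, $\gamma$ a path from $x_0$, $f:(S^n,d_0)\to(X,\gamma(1))$ with image in some element of $\mathscr{U}$, and $\gamma\ast f$ the path-conjugate of $f$ by $\gamma$ (representing the image of $[f]$ under change of basepoint along $\gamma$). The Spanier topology on $\pi_n(X,x_0)$ is the topology with basis the cosets $g\,\mathrm{Span}_n(\mathscr{U},x_0)$, $g\in\pi_n(X,x_0)$, $(\mathscr{U},U_0)\in\mathrm{cov}(X)$. *)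

From HB Require Import structures.
From mathcomp Require Import all_boot all_order all_algebra.
From mathcomp Require Import all_classical all_reals.
From mathcomp Require Import Rstruct.
Set Implicit Arguments. Unset Strict Implicit. Unset Printing Implicit Defensive.
Import Order.TTheory GRing.Theory Num.Theory.
Local Open Scope classical_set_scope.
Local Open Scope ring_scope.

Notation RR := Rdefinitions.R.

Section Spanier.
Variables (X : Type) (d : X -> X -> RR) (x0 : X) (n : nat).

Definition is_metric : Prop :=
  [/\ forall x y, 0 <= d x y, forall x y, d x y = 0 <-> x = y,
      forall x y, d x y = d y x & forall x y z, d x z <= d x y + d y z].

Definition d_open (A : set X) : Prop :=
  forall x, A x -> exists2 e : RR, 0 < e & forall y, d x y < e -> A y.

Definition unit_int (s : RR) : Prop := 0 <= s <= 1.
Definition cube (t : 'I_n -> RR) : Prop := forall i, unit_int (t i).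
Definition cube_bdry (t : 'I_n -> RR) : Prop :=
  cube t /\ exists i, t i = 0 \/ t i = 1.

Definition path_cont (g : RR -> X) : Prop :=
  forall s, unit_int s -> forall e : RR, 0 < e -> exists2 del : RR, 0 < del &
    forall s', unit_int s' -> `|s - s'| < del -> d (g s) (g s') < e.

Definition is_path (g : RR -> X) (a b : X) : Prop :=
  path_cont g /\ g 0 = a /\ g 1 = b.

Definition path_connected : Prop := forall a b, exists g, is_path g a b.

Definition cube_cont (f : ('I_n -> RR) -> X) : Prop :=
  forall t, cube t -> forall e : RR, 0 < e -> exists2 del : RR, 0 < del &
    forall t', cube t' -> (forall i, `|t i - t' i| < del) -> d (f t) (f t') < e.

(** based maps (I^n, bdry I^n) -> (X, y); these are the based maps
    (S^n, d_0) -> (X, y) via S^n = I^n / bdry I^n *)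
Definition based_map (y : X) (f : ('I_n -> RR) -> X) : Prop :=
  cube_cont f /\ forall t, cube_bdry t -> f t = y.

Definition is_loop := based_map x0.

Definition homotopic (a b : ('I_n -> RR) -> X) : Prop :=
  is_loop a /\ is_loop b /\
  exists H : ('I_n -> RR) -> RR -> X,
    [/\ forall t s, cube t -> unit_int s -> forall e : RR, 0 < e ->
          exists2 del : RR, 0 < del & forall t' s', cube t' -> unit_int s' ->
            (forall i, `|t i - t' i| < del) -> `|s - s'| < del ->
            d (H t s) (H t' s') < e,
        forall t, cube t -> H t 0 = a t,
        forall t, cube t -> H t 1 = b t &
        forall t s, cube_bdry t -> unit_int s -> H t s = x0].

(** homotopy classes: elements of pi_n(X, x0) are represented as the sets
    of loops homotopic to a given loop *)
Definition hclass (a : ('I_n -> RR) -> X) : set (('I_n -> RR) -> X) :=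
  [set b | homotopic a b].

Definition is_class (c : set (('I_n -> RR) -> X)) : Prop :=
  exists2 a, is_loop a & c = hclass a.

Definition first_coord : option 'I_n := [pick i : 'I_n | val i == 0%N].

Definition setc (t : 'I_n -> RR) (i : 'I_n) (v : RR) : 'I_n -> RR :=
  fun j => if j == i then v else t j.

Definition concat (a b : ('I_n -> RR) -> X) : ('I_n -> RR) -> X :=
  fun t => match first_coord with
  | Some i => if t i <= 2^-1 then a (setc t i (2 * t i))
              else b (setc t i (2 * t i - 1))
  | None => a t
  end.

Definition rev_loop (a : ('I_n -> RR) -> X) : ('I_n -> RR) -> X :=
  fun t => match first_coord with
  | Some i => a (setc t i (1 - t i))
  | None => a t
  end.

Definition const_loop : ('I_n -> RR) -> X := fun _ => x0.

Definition mulc (p q : set (('I_n -> RR) -> X)) : set (('I_n -> RR) -> X) :=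
  [set c | exists a b, [/\ p a, q b & homotopic (concat a b) c]].
Definition invc (p : set (('I_n -> RR) -> X)) : set (('I_n -> RR) -> X) :=
  [set c | exists a, p a /\ homotopic (rev_loop a) c].
Definition onec : set (('I_n -> RR) -> X) := hclass const_loop.

(** path-conjugate gamma * f of a based map f at gamma(1):
    f shrunk to the inner cube [1/4,3/4]^n, gamma along the radial segments *)
Definition cdist (t : 'I_n -> RR) : RR := \big[Num.max/0]_i `|t i - 2^-1|.

Definition pathconj (g : RR -> X) (f : ('I_n -> RR) -> X) : ('I_n -> RR) -> X :=
  fun t => if cdist t <= 4^-1 then f (fun i => 2 * t i - 2^-1)
           else g (2 - 4 * cdist t).

Definition cov (U : set (set X)) (U0 : set X) : Prop :=
  [/\ forall A, U A -> d_open A,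
      forall x, exists2 A, U A & A x,
      forall x, exists2 W, d_open W /\ W x &
        finite_set [set A | U A /\ (A `&` W) !=set0] &
      U U0 /\ U0 x0].

Definition span_gens (U : set (set X)) : set (set (('I_n -> RR) -> X)) :=
  [set c | exists g f A, [/\ is_path g x0 (g 1), based_map (g 1) f, U A,
     (forall t, cube t -> A (f t)) & c = hclass (pathconj g f)]].

Definition subgroup (S : set (set (('I_n -> RR) -> X))) : Prop :=
  [/\ S onec, forall p q, S p -> S q -> S (mulc p q) &
      forall p, S p -> S (invc p)].

Definition Span (U : set (set X)) : set (set (('I_n -> RR) -> X)) :=
  [set c | forall S, span_gens U `<=` S -> subgroup S -> S c].

Definition coset (g : set (('I_n -> RR) -> X)) (S : set (set (('I_n -> RR) -> X))) :=
  [set c | exists2 s, S s & c = mulc g s].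

Definition spanier_open (O : set (set (('I_n -> RR) -> X))) : Prop :=
  forall c, O c -> exists U U0 g,
    [/\ cov U U0, is_class g, coset g (Span U) c & coset g (Span U) `<=` O].

Definition mu (a b : ('I_n -> RR) -> X) : RR :=
  sup [set d (a t) (b t) | t in cube].

Definition rho (p q : set (('I_n -> RR) -> X)) : RR :=
  inf [set mu a b | a in p & b in q].

Definition rho_open (O : set (set (('I_n -> RR) -> X))) : Prop :=
  forall c, O c -> exists2 e : RR, 0 < e &
    forall c', is_class c' -> rho c c' < e -> O c'.

End Spanier.

(* The rho-neighbourhood of radius e of a class [a] contains the coset
   [a] Span_n(U) as soon as U is a locally finite open cover by sets of radius
   e/4, and such a cover exists by Stone's theorem (metric spaces are
   paracompact).  Indeed, the classes containing a loop uniformly e/2-close to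
   a null-homotopic loop form a subgroup of pi_n(X, x0), because concatenation
   and reversal preserve both null-homotopy and uniform closeness.  Each
   generator [gamma * f] of Span_n(U) lies in it: gamma * f is e/2-close to
   gamma * (constant map at gamma(1)), which contracts along gamma.  So every
   s in Span_n(U) is represented by a loop b1 that is e/2-close to some
   null-homotopic a1, and then rho([a], [a] s) <= mu(a a1, a b1) <= e/2. *)

From mathcomp Require Import all_boot all_order all_algebra.
From mathcomp Require Import all_classical all_reals wochoice.
From mathcomp Require Import Rstruct lra ring.
Set Implicit Arguments. Unset Strict Implicit. Unset Printing Implicit Defensive.
Import Order.TTheory GRing.Theory Num.Theory.
Local Open Scope classical_set_scope.
Local Open Scope ring_scope.

Lemma unit_int0 : unit_int 0.
Proof. by rewrite /unit_int lexx ler01. Qed.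

Lemma unit_int1 : unit_int 1.
Proof. by rewrite /unit_int lexx ler01. Qed.

Section Metric.
Variables (X : Type) (d : X -> X -> RR).
Hypothesis d_metric : is_metric d.

Lemma d_ge0 x y : 0 <= d x y. Proof. by case: d_metric. Qed.
Lemma d_xx x : d x x = 0. Proof. by case: d_metric => _ h _ _; apply/h. Qed.
Lemma d_sym x y : d x y = d y x. Proof. by case: d_metric. Qed.
Lemma d_tri x y z : d x z <= d x y + d y z. Proof. by case: d_metric. Qed.

Lemma d_open_ball x r : d_open d [set y | d x y < r].
Proof.
move=> y /= hy; exists (r - d x y) => [|w hw /=]; first by lra.
by have := d_tri x y w; lra.
Qed.

End Metric.

Definition clamp (x : RR) : RR := Num.min 1 (Num.max 0 x).

Lemma unit_int_clamp x : unit_int (clamp x).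
Proof.
rewrite /unit_int /clamp; apply/andP; split; last by rewrite ge_min lexx.
by rewrite le_min ler01 le_max lexx.
Qed.

Lemma clamp_id x : unit_int x -> clamp x = x.
Proof. by move=> /andP[h0 h1]; rewrite /clamp (max_idPr h0) (min_idPr h1). Qed.

Lemma clamp_ge1 x : 1 <= x -> clamp x = 1.
Proof. by move=> h; rewrite /clamp /Order.min /Order.max; repeat case: ifP => /=; lra. Qed.

Lemma clamp_lip x y : `|clamp x - clamp y| <= `|x - y|.
Proof.
have := ler_norm (x - y); have := ler_norm (y - x); rewrite distrC => h1 h2.
by rewrite /clamp /Order.min /Order.max; apply/ler_normlP; split;
  repeat case: ifP => /=; lra.
Qed.

Section CubeDistance.
Variable n : nat.
Implicit Types t : 'I_n -> RR.

Lemma cdist_ge0 t : 0 <= cdist t.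
Proof. by rewrite /cdist; elim/big_ind: _ => // x y hx hy; rewrite le_max hx. Qed.

Lemma le_cdist i t : `|t i - 2^-1| <= cdist t.
Proof. exact: (le_bigmax 0 (fun i => `|t i - 2^-1|) i). Qed.

Lemma cdist_lt t c : 0 < c -> (forall i, `|t i - 2^-1| < c) -> cdist t < c.
Proof. by move=> hc h; apply: bigmax_lt. Qed.

Lemma cdist_le t c : 0 <= c -> (forall i, `|t i - 2^-1| <= c) -> cdist t <= c.
Proof. by move=> hc h; apply: bigmax_le. Qed.

Lemma cdist_lip t t' e : 0 < e -> (forall i, `|t i - t' i| < e) ->
  cdist t < cdist t' + e.
Proof.
move=> he h; apply: cdist_lt => [|i]; first by have := cdist_ge0 t'; lra.
have := le_cdist i t'; have := h i.
by have := ler_normD (t i - t' i) (t' i - 2^-1); rewrite addrA subrK; lra.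
Qed.

Lemma cube_cdist t : cube t -> cdist t <= 2^-1.
Proof.
move=> ct; apply: cdist_le => [|j]; first by rewrite invr_ge0 ler0n.
by have /andP[u1 u2] := ct j; apply/ler_normlP; split; lra.
Qed.

Lemma bdry_cdist t : cube_bdry t -> cdist t = 2^-1.
Proof.
case=> ct [j hj]; apply/eqP; rewrite eq_le cube_cdist //=.
apply: le_trans (le_cdist j t); have := ct j.
by case: hj => -> _; rewrite ?sub0r ?normrN ger0_norm //; lra.
Qed.

Lemma cdist_eq_quarter t : cdist t = 4^-1 -> exists j, `|t j - 2^-1| = 4^-1.
Proof.
move=> E; apply: contrapT => N.
suff : cdist t < 4^-1 by rewrite E ltxx.
apply: cdist_lt => [|j]; first by rewrite invr_gt0 ltr0n.
rewrite lt_neqAle -E le_cdist andbT E; apply/eqP => hj; exact: N (ex_intro _ j hj).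
Qed.

End CubeDistance.

Section CylinderContinuity.
Context {n : nat}.
Local Notation T := ('I_n -> RR).

Definition in_cyl (t : T) (s : RR) := cube t /\ unit_int s.
Definition pt_near (e : RR) (u v : T) := forall j, `|u j - v j| < e.
Definition real_near (e x y : RR) := `|x - y| < e.
Definition cyl_near (e : RR) (t : T) (s : RR) (t' : T) (s' : RR) :=
  pt_near e t t' /\ real_near e s s'.

Definition cyl_cont (Y : Type) (near : RR -> Y -> Y -> Prop) (F : T -> RR -> Y) :=
  forall t s, in_cyl t s -> forall e : RR, 0 < e -> exists2 del : RR, 0 < del &
    forall t' s', in_cyl t' s' -> cyl_near del t s t' s' -> near e (F t s) (F t' s').

Lemma cyl_near_min del1 del2 t s t' s' : cyl_near (Num.min del1 del2) t s t' s' ->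
  cyl_near del1 t s t' s' /\ cyl_near del2 t s t' s'.
Proof.
rewrite /cyl_near /pt_near /real_near => -[h1]; rewrite lt_min => /andP[h2 h3].
by split; split=> // i; have := h1 i; rewrite lt_min => /andP[].
Qed.

Section Generic.
Variables (Y : Type) (near : RR -> Y -> Y -> Prop).

Lemma cyl_cont_ext F G : (forall t s, in_cyl t s -> F t s = G t s) ->
  cyl_cont near G -> cyl_cont near F.
Proof.
move=> FG hG t s D e he; have [del hd H] := hG t s D e he.
by exists del => // t' s' D' C; rewrite !FG //; apply: H.
Qed.

Lemma cyl_cont_comp (G : T -> RR -> Y) phi sig :
  cyl_cont near G -> cyl_cont pt_near phi -> cyl_cont real_near sig ->
  (forall t s, in_cyl t s -> in_cyl (phi t s) (sig t s)) ->
  cyl_cont near (fun t s => G (phi t s) (sig t s)).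
Proof.
move=> hG hphi hsig hD t s D e he.
have [del hd K] := hG _ _ (hD _ _ D) e he.
have [d1 hd1 K1] := hphi t s D del hd; have [d2 hd2 K2] := hsig t s D del hd.
exists (Num.min d1 d2) => [|t' s' D' /cyl_near_min[C1 C2]]; first by rewrite lt_min hd1.
by apply: K; [exact: hD | split; [exact: K1 | exact: K2]].
Qed.

Lemma cyl_cont_paste F1 F2 th c :
  cyl_cont near F1 -> cyl_cont near F2 -> cyl_cont real_near th ->
  (forall t s, in_cyl t s -> th t s = c -> F1 t s = F2 t s) ->
  cyl_cont near (fun t s => if th t s <= c then F1 t s else F2 t s).
Proof.
move=> h1 h2 hth E t s D e he /=.
have [d1 hd1 K1] := h1 t s D e he; have [d2 hd2 K2] := h2 t s D e he.
have hd12 : 0 < Num.min d1 d2 by rewrite lt_min hd1.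
case: (ltrgtP (th t s) c) => [lt|gt|eq].
- have hc : 0 < c - th t s by rewrite subr_gt0.
  have [d3 hd3 K3] := hth t s D _ hc.
  exists (Num.min d1 d3) => [|t' s' D' /cyl_near_min[C1 C3]]; first by rewrite lt_min hd1.
  have /ltr_normlP[k1 k2] := K3 _ _ D' C3.
  by rewrite ifT; [exact: K1 | lra].
- have hc : 0 < th t s - c by rewrite subr_gt0.
  have [d3 hd3 K3] := hth t s D _ hc.
  exists (Num.min d2 d3) => [|t' s' D' /cyl_near_min[C2 C3]]; first by rewrite lt_min hd2.
  have /ltr_normlP[k1 k2] := K3 _ _ D' C3.
  by rewrite ifF; [exact: K2 | apply/negbTE; rewrite -ltNge; lra].
- exists (Num.min d1 d2) => // t' s' D' /cyl_near_min[C1 C2].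
  by case: ifP => _; [exact: K1 | rewrite E //; exact: K2].
Qed.

End Generic.

Lemma cyl_cont_coord i : cyl_cont real_near (fun t _ => t i).
Proof. by move=> t s _ e he; exists e => // t' s' _ [C _]; exact: C. Qed.

Lemma cyl_cont_time : cyl_cont real_near (fun _ s => s).
Proof. by move=> t s _ e he; exists e => // t' s' _ [_ C]. Qed.

Lemma cyl_cont_affine f a b : cyl_cont real_near f ->
  cyl_cont real_near (fun t s => a * f t s + b).
Proof.
move=> hf t s D e he.
have ha : 0 < `|a| + 1 by have := normr_ge0 a; lra.
have [del hdel H] := hf t s D (e / (`|a| + 1)) (divr_gt0 he ha).
exists del => // t' s' D' /(H t' s' D'); rewrite /real_near ltr_pdivlMr // => h.
rewrite opprD addrACA subrr addr0 -mulrBr normrM.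
by have := normr_ge0 (f t s - f t' s'); have := normr_ge0 a; nra.
Qed.

Lemma cyl_cont_mul f g : cyl_cont real_near f -> cyl_cont real_near g ->
  cyl_cont real_near (fun t s => f t s * g t s).
Proof.
move=> hf hg t s D e he.
set F := `|f t s| + 1; set G := `|g t s| + 1.
have hF : 0 < F by rewrite /F; have := normr_ge0 (f t s); lra.
have hG : 0 < G by rewrite /G; have := normr_ge0 (g t s); lra.
have e1 : 0 < e / (4 * G) by apply: divr_gt0 => //; lra.
have e2 : 0 < Num.min 1 (e / (4 * F)) by rewrite lt_min ltr01 divr_gt0 //; lra.
have [d1 hd1 H1] := hf t s D _ e1; have [d2 hd2 H2] := hg t s D _ e2.
exists (Num.min d1 d2) => [|t' s' D' /cyl_near_min[C1 C2]]; first by rewrite lt_min hd1.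
have := H1 t' s' D' C1; have := H2 t' s' D' C2.
rewrite /real_near lt_min => /andP[g1 g2] f1.
have g1' : `|g t' s'| <= G.
  have := ler_normD (g t' s' - g t s) (g t s).
  by rewrite subrK [`|g t' s' - _|]distrC /G; lra.
have k1 : `|f t s * (g t s - g t' s')| < e / 2.
  rewrite normrM; move: g2; rewrite ltr_pdivlMr; last by lra.
  by rewrite /F; have := normr_ge0 (f t s); have := normr_ge0 (g t s - g t' s'); nra.
have k2 : `|(f t s - f t' s') * g t' s'| < e / 2.
  rewrite normrM; move: f1; rewrite ltr_pdivlMr; last by lra.
  by have := normr_ge0 (f t s - f t' s'); have := normr_ge0 (g t' s'); nra.
have -> : f t s * g t s - f t' s' * g t' s' =
  f t s * (g t s - g t' s') + (f t s - f t' s') * g t' s' by ring.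
by have := ler_normD (f t s * (g t s - g t' s')) ((f t s - f t' s') * g t' s'); lra.
Qed.

Lemma cyl_cont_clamp f : cyl_cont real_near f ->
  cyl_cont real_near (fun t s => clamp (f t s)).
Proof.
move=> hf t s D e he; have [del hd H] := hf t s D e he.
by exists del => // t' s' D' C; apply: le_lt_trans (clamp_lip _ _) (H _ _ D' C).
Qed.

Lemma cyl_cont_cdist : cyl_cont real_near (fun t _ => cdist t).
Proof.
move=> t s _ e he; exists e => // t' s' _ [C _]; apply/ltr_normlP.
have C' : forall i, `|t' i - t i| < e by move=> i; rewrite distrC.
by have := cdist_lip he C; have := cdist_lip he C'; split; lra.
Qed.

Lemma cyl_cont_id : cyl_cont pt_near (fun t _ => t).
Proof. by move=> t s _ e he; exists e => // t' s' _ [C _]. Qed.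

Lemma cyl_cont_setc i v : cyl_cont real_near v ->
  cyl_cont pt_near (fun t s => setc t i (v t s)).
Proof.
move=> hv t s D e he; have [del hd H] := hv t s D e he.
exists (Num.min del e) => [|t' s' D' /cyl_near_min[C1 [C2 _]] j]; first by rewrite lt_min hd.
by rewrite /setc; case: eqP => _; [exact: H | exact: C2].
Qed.

Lemma cyl_cont_lipschitz (f : RR -> RR) K : 0 < K ->
  (forall x y, `|f x - f y| <= K * `|x - y|) -> cyl_cont pt_near (fun t _ j => f (t j)).
Proof.
move=> hK hf t s D e he; exists (e / K) => [|t' s' _ [C _] j]; first exact: divr_gt0.
by apply: le_lt_trans (hf _ _) _; rewrite mulrC -ltr_pdivlMr.
Qed.

End CylinderContinuity.

Definition d_near (X : Type) (d : X -> X -> RR) (e : RR) (x y : X) := d x y < e.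

Section Homotopy.
Variables (X : Type) (d : X -> X -> RR) (x0 : X) (n : nat).
Local Notation T := ('I_n -> RR).
Local Notation homotopic := (homotopic d x0).

Definition fixes_bdry (H : T -> RR -> X) :=
  forall t s, cube_bdry t -> unit_int s -> H t s = x0.

Lemma cyl_cont_const_in_time (a : T -> X) : cube_cont d a ->
  cyl_cont (d_near d) (fun t _ => a t).
Proof.
move=> ha t s [ct _] e he; have [del hd K] := ha t ct e he.
by exists del => // t' s' [ct' _] [C _]; apply: K.
Qed.

Lemma loop_of_htpy (H : T -> RR -> X) s (a : T -> X) :
  cyl_cont (d_near d) H -> fixes_bdry H -> unit_int s ->
  (forall t, cube t -> H t s = a t) -> is_loop d x0 a.
Proof.
move=> hH hB us ha; split=> [t ct e he|t bt]; last by rewrite -ha ?hB //; case: bt.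
have [del hd K] := hH t s (conj ct us) e he.
exists del => // t' ct' C; rewrite -!ha //; apply: K => //.
by split=> //; rewrite /real_near subrr normr0.
Qed.

Lemma homotopicP (a b : T -> X) : homotopic a b <-> exists H : T -> RR -> X,
  [/\ cyl_cont (d_near d) H, fixes_bdry H,
      forall t, cube t -> H t 0 = a t & forall t, cube t -> H t 1 = b t].
Proof.
split=> [[_ [_ [H [hc h0 h1 hb]]]]|[H [hc hb h0 h1]]].
  exists H; split=> // t s [ct us] e he; have [del hd K] := hc t s ct us e he.
  by exists del => // t' s' [ct' us'] [C1 C2]; apply: K.
split; first exact: loop_of_htpy hc hb unit_int0 h0.
split; first exact: loop_of_htpy hc hb unit_int1 h1.
exists H; split=> // t s ct us e he; have [del hd K] := hc t s (conj ct us) e he.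
by exists del => // t' s' ct' us' C1 C2; apply: K.
Qed.

Lemma homotopic_refl (a : T -> X) : is_loop d x0 a -> homotopic a a.
Proof.
case=> ca ba; apply/homotopicP; exists (fun t _ => a t).
by split=> // [|t s bt _]; [exact: cyl_cont_const_in_time | exact: ba].
Qed.

Lemma homotopic_sym (a b : T -> X) : homotopic a b -> homotopic b a.
Proof.
move=> /homotopicP[H [hc hb h0 h1]]; apply/homotopicP.
exists (fun t s => H t (-1 * s + 1)); split.
- apply: cyl_cont_comp hc cyl_cont_id (cyl_cont_affine _ _ cyl_cont_time) _.
  by move=> t s [ct /andP[u1 u2]]; split=> //; apply/andP; split; lra.
- by move=> t s bt /andP[u1 u2]; apply: hb => //; apply/andP; split; lra.
- by move=> t ct; rewrite mulr0 add0r h1.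
- by move=> t ct; rewrite mulN1r addNr h0.
Qed.

Lemma homotopic_trans (a b c : T -> X) :
  homotopic a b -> homotopic b c -> homotopic a c.
Proof.
move=> /homotopicP[H1 [hc1 hb1 h10 h11]] /homotopicP[H2 [hc2 hb2 h20 h21]].
(* The clamps extend both halves continuously to the whole cylinder, as the
   pasting lemma requires; they are the identity where each half is used. *)
apply/homotopicP; exists (fun t s => if s <= 2^-1 then H1 t (clamp (2 * s + 0))
  else H2 t (clamp (2 * s + -1))); split.
- have hD t s x : in_cyl t s -> in_cyl t (clamp x).
    by case=> ct _; split=> //; exact: unit_int_clamp.
  apply: cyl_cont_paste cyl_cont_time _ => [||t s [ct _] ->].
  + apply: cyl_cont_comp hc1 cyl_cont_id
      (cyl_cont_clamp (cyl_cont_affine _ _ cyl_cont_time)) _ => t s; exact: hD.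
  + apply: cyl_cont_comp hc2 cyl_cont_id
      (cyl_cont_clamp (cyl_cont_affine _ _ cyl_cont_time)) _ => t s; exact: hD.
  have -> : 2 * 2^-1 + 0 = 1 :> RR by field.
  have -> : 2 * 2^-1 + -1 = 0 :> RR by field.
  by rewrite (clamp_id unit_int1) (clamp_id unit_int0) h11 ?h20.
- move=> t s bt us.
  by case: ifP => _; [apply: hb1 | apply: hb2] => //; exact: unit_int_clamp.
- move=> t ct; rewrite ifT ?invr_ge0 ?ler0n //.
  by rewrite mulr0 addr0 (clamp_id unit_int0) h10.
- move=> t ct; rewrite ifF; last by apply/negbTE; rewrite -ltNge; lra.
  by rewrite (_ : 2 * 1 + -1 = 1) ?(clamp_id unit_int1) ?h21 //; ring.
Qed.

Lemma hclass_homotopic (a b : T -> X) :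
  homotopic a b -> hclass d x0 a = hclass d x0 b.
Proof.
move=> hab; apply: funext => c; apply: propext.
by split; [apply: homotopic_trans (homotopic_sym hab) | apply: homotopic_trans hab].
Qed.

End Homotopy.

Section FirstCoordinate.
Variables (n : nat) (i : 'I_n).
Implicit Types t : 'I_n -> RR.

Lemma cube_setc t v : cube t -> unit_int v -> cube (setc t i v).
Proof. by move=> ct uv j; rewrite /setc; case: eqP. Qed.

Lemma cube_bdry_setc t v : cube_bdry t -> unit_int v ->
  (t i = 0 -> v = 0 \/ v = 1) -> (t i = 1 -> v = 0 \/ v = 1) ->
  cube_bdry (setc t i v).
Proof.
move=> [ct [j hj]] uv h0 h1; split; first exact: cube_setc.
exists j; rewrite /setc; case: eqP => [E|//]; rewrite E in hj.
by case: hj; [apply: h0 | apply: h1].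
Qed.

Lemma cube_bdry_setc01 t v : cube t -> v = 0 \/ v = 1 -> cube_bdry (setc t i v).
Proof.
move=> ct hv; split; last by exists i; rewrite /setc eqxx.
by apply: cube_setc => //; case: hv => ->; [exact: unit_int0 | exact: unit_int1].
Qed.

Lemma setc_id t : setc t i (t i) = t.
Proof. by apply: funext => j; rewrite /setc; case: eqP => [->|]. Qed.

End FirstCoordinate.

Section Concatenation.
Variables (X : Type) (d : X -> X -> RR) (x0 : X) (n : nat).
Variables (i : 'I_n) (first_coord_i : first_coord n = Some i).
Local Notation T := ('I_n -> RR).
Local Notation homotopic := (homotopic d x0).
Local Notation is_loop := (is_loop d x0).
Local Notation const := (@const_loop X x0 n).

Lemma concatE (a b : T -> X) t : concat a b t =
  if t i <= 2^-1 then a (setc t i (2 * t i)) else b (setc t i (2 * t i - 1)).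
Proof. by rewrite /concat first_coord_i. Qed.

Lemma rev_loopE (a : T -> X) t : rev_loop a t = a (setc t i (1 - t i)).
Proof. by rewrite /rev_loop first_coord_i. Qed.

Lemma cyl_cont_concat (H1 H2 : T -> RR -> X) :
  cyl_cont (d_near d) H1 -> cyl_cont (d_near d) H2 ->
  fixes_bdry x0 H1 -> fixes_bdry x0 H2 ->
  cyl_cont (d_near d) (fun t s => concat (H1^~ s) (H2^~ s) t).
Proof.
move=> c1 c2 b1 b2.
apply: (cyl_cont_ext (G := fun t s => if t i <= 2^-1
   then H1 (setc t i (clamp (2 * t i + 0))) s
   else H2 (setc t i (clamp (2 * t i + -1))) s)).
  move=> t s [ct _]; rewrite concatE; have /andP[u1 u2] := ct i.
  by case: ifP => h; rewrite clamp_id ?addr0 //; apply/andP; split;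
    rewrite ?lerNgt ?h //; lra.
have hD v t s : in_cyl t s -> in_cyl (setc t i (clamp v)) s.
  by case=> ct us; split=> //; apply: cube_setc ct (unit_int_clamp _).
apply: cyl_cont_paste (cyl_cont_coord i) _ => [||t s [ct us] ->].
- apply: cyl_cont_comp c1 (cyl_cont_setc _ _) cyl_cont_time _ => [|t s]; last exact: hD.
  exact: cyl_cont_clamp (cyl_cont_affine _ _ (cyl_cont_coord i)).
- apply: cyl_cont_comp c2 (cyl_cont_setc _ _) cyl_cont_time _ => [|t s]; last exact: hD.
  exact: cyl_cont_clamp (cyl_cont_affine _ _ (cyl_cont_coord i)).
have -> : 2 * 2^-1 + 0 = 1 :> RR by field.
have -> : 2 * 2^-1 + -1 = 0 :> RR by field.
rewrite (clamp_id unit_int1) (clamp_id unit_int0) b1 ?b2 //.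
  by apply: cube_bdry_setc01 => //; left.
by apply: cube_bdry_setc01 => //; right.
Qed.

Lemma fixes_bdry_concat (H1 H2 : T -> RR -> X) :
  fixes_bdry x0 H1 -> fixes_bdry x0 H2 ->
  fixes_bdry x0 (fun t s => concat (H1^~ s) (H2^~ s) t).
Proof.
move=> b1 b2 t s bt us; rewrite concatE; have /andP[u1 u2] := bt.1 i.
case: ifP => h.
  apply: b1 => //; apply: cube_bdry_setc => // [|->|h1]; last by move: h; rewrite h1; lra.
    by apply/andP; split; lra.
  by left; rewrite mulr0.
move/negbT: h; rewrite -ltNge => h.
apply: b2 => //; apply: cube_bdry_setc => // [|h1|->]; first by apply/andP; split; lra.
  by move: h; rewrite h1; lra.
by right; rewrite mulr1; lra.
Qed.

Lemma concat_ext (a a' b b' : T -> X) t :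
  (forall u, cube u -> a u = a' u) -> (forall u, cube u -> b u = b' u) ->
  cube t -> concat a b t = concat a' b' t.
Proof.
move=> ha hb ct; rewrite !concatE; have /andP[u1 u2] := ct i.
case: ifP => h; [rewrite ha | rewrite hb] => //; apply: cube_setc => //;
  apply/andP; split; rewrite ?lerNgt ?h //; lra.
Qed.

Lemma homotopic_concat (a a' b b' : T -> X) : homotopic a a' -> homotopic b b' ->
  homotopic (concat a b) (concat a' b').
Proof.
move=> /homotopicP[H1 [hc1 hb1 h10 h11]] /homotopicP[H2 [hc2 hb2 h20 h21]].
apply/homotopicP; exists (fun t s => concat (H1^~ s) (H2^~ s) t); split.
- exact: cyl_cont_concat.
- exact: fixes_bdry_concat.
- by move=> t ct; apply: concat_ext.
- by move=> t ct; apply: concat_ext.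
Qed.

Lemma loop_concat (a b : T -> X) : is_loop a -> is_loop b -> is_loop (concat a b).
Proof. by move=> la lb; case: (homotopic_concat (homotopic_refl la) (homotopic_refl lb)). Qed.

Lemma homotopic_rev (a a' : T -> X) : homotopic a a' ->
  homotopic (rev_loop a) (rev_loop a').
Proof.
move=> /homotopicP[H [hc hb h0 h1]]; apply/homotopicP.
have flip t : cube t -> unit_int (-1 * t i + 1).
  by move=> ct; have /andP[u1 u2] := ct i; apply/andP; split; lra.
have flipE (t : T) : -1 * t i + 1 = 1 - t i by ring.
exists (fun t s => H (setc t i (-1 * t i + 1)) s); split.
- apply: cyl_cont_comp hc (cyl_cont_setc _ (cyl_cont_affine _ _ (cyl_cont_coord i)))
    cyl_cont_time _.
  by move=> t s [ct us]; split=> //; apply: cube_setc ct (flip t ct).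
- move=> t s bt us; apply: hb => //; apply: cube_bdry_setc => //; first exact: flip bt.1.
    by move=> ->; right; rewrite mulr0 add0r.
  by move=> ->; left; rewrite mulN1r addNr.
- by move=> t ct; rewrite rev_loopE -flipE h0 //; apply: cube_setc ct (flip t ct).
- by move=> t ct; rewrite rev_loopE -flipE h1 //; apply: cube_setc ct (flip t ct).
Qed.

Lemma loop_rev (a : T -> X) : is_loop a -> is_loop (rev_loop a).
Proof. by move=> la; case: (homotopic_rev (homotopic_refl la)). Qed.

Lemma concat_const : concat const const = const.
Proof. by apply: funext => t; rewrite concatE; case: ifP. Qed.

Lemma rev_const : rev_loop const = const.
Proof. by apply: funext => t; rewrite rev_loopE. Qed.

Lemma homotopic_concat_const (a : T -> X) : is_loop a -> homotopic (concat a const) a.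
Proof.
move=> la; have [ca ba] := la; apply/homotopicP.
exists (fun t s => a (setc t i (clamp ((-1 * s + 2) * t i)))); split.
- apply: (cyl_cont_comp (G := fun u _ => a u)) cyl_cont_time _.
  + exact: cyl_cont_const_in_time.
  + apply/cyl_cont_setc/cyl_cont_clamp/cyl_cont_mul; last exact: cyl_cont_coord.
    exact: cyl_cont_affine cyl_cont_time.
  + by move=> t s [ct us]; split=> //; apply: cube_setc ct (unit_int_clamp _).
- move=> t s bt /andP[s1 s2]; apply: ba; apply: cube_bdry_setc => //.
  + exact: unit_int_clamp.
  + by move=> ->; left; rewrite mulr0 (clamp_id unit_int0).
  + by move=> ->; right; rewrite mulr1 clamp_ge1 //; lra.
- move=> t ct; rewrite concatE mulr0 add0r; have /andP[u1 u2] := ct i.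
  case: ifP => h; first by rewrite clamp_id //; apply/andP; split; lra.
  rewrite clamp_ge1; last by move/negbT: h; rewrite -ltNge; lra.
  by rewrite /const_loop ba //; apply: cube_bdry_setc01 => //; right.
- move=> t ct; rewrite (_ : (-1 * 1 + 2) * t i = t i); last by ring.
  by rewrite clamp_id ?setc_id.
Qed.

Lemma mulc_hclass (a b : T -> X) : is_loop a -> is_loop b ->
  mulc d x0 (hclass d x0 a) (hclass d x0 b) = hclass d x0 (concat a b).
Proof.
move=> la lb; apply: funext => c; apply: propext; split.
  by case=> a' [b' [ha hb hc]]; apply: homotopic_trans (homotopic_concat ha hb) hc.
by move=> h; exists a, b; split => //; apply: homotopic_refl.
Qed.

Lemma invc_hclass (a : T -> X) : is_loop a ->
  invc d x0 (hclass d x0 a) = hclass d x0 (rev_loop a).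
Proof.
move=> la; apply: funext => c; apply: propext; split.
  by case=> a' [ha hc]; apply: homotopic_trans (homotopic_rev ha) hc.
by move=> h; exists a; split => //; apply: homotopic_refl.
Qed.

Lemma concat_close (a1 a2 b1 b2 : T -> X) r :
  (forall u, cube u -> d (a1 u) (b1 u) <= r) ->
  (forall u, cube u -> d (a2 u) (b2 u) <= r) ->
  forall t, cube t -> d (concat a1 a2 t) (concat b1 b2 t) <= r.
Proof.
move=> h1 h2 t ct; rewrite !concatE; have /andP[u1 u2] := ct i.
case: ifP => h; [apply: h1 | apply: h2]; apply: cube_setc => //;
  apply/andP; split; rewrite ?lerNgt ?h //; lra.
Qed.

Lemma rev_close (a b : T -> X) r :
  (forall u, cube u -> d (a u) (b u) <= r) ->
  forall t, cube t -> d (rev_loop a t) (rev_loop b t) <= r.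
Proof.
move=> h t ct; rewrite !rev_loopE; apply: h; apply: cube_setc => //.
by have /andP[u1 u2] := ct i; apply/andP; split; lra.
Qed.

End Concatenation.

Section PathConjugate.
Variables (X : Type) (d : X -> X -> RR) (x0 : X) (n : nat).
Local Notation T := ('I_n -> RR).
Variables (g : RR -> X) (g_path : is_path d g x0 (g 1)).

Lemma inner_cube (t : T) j : cdist t <= 4^-1 -> unit_int (2 * t j - 2^-1).
Proof.
move=> h; have /ler_normlP[h1 h2] := le_trans (le_cdist j t) h.
by apply/andP; split; lra.
Qed.

Lemma outer_shell (t : T) : cube t -> 4^-1 < cdist t -> unit_int (2 - 4 * cdist t).
Proof. by move=> ct h; have := cube_cdist ct => h2; apply/andP; split; lra. Qed.

Lemma cyl_cont_along_path (sig : T -> RR -> RR) : cyl_cont real_near sig ->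
  cyl_cont (d_near d) (fun t s => g (clamp (sig t s))).
Proof.
have [pg _] := g_path; move=> hs t s D e he.
have [del hd K] := pg _ (unit_int_clamp (sig t s)) e he.
have [d1 hd1 K1] := cyl_cont_clamp hs D hd.
by exists d1 => // t' s' D' C; apply: K (unit_int_clamp _) (K1 _ _ D' C).
Qed.

Lemma loop_pathconj (f : T -> X) : based_map d (g 1) f -> is_loop d x0 (pathconj g f).
Proof.
have [_ [g0 _]] := g_path; move=> [cf bf].
have lip x y : `|clamp (2 * x - 2^-1) - clamp (2 * y - 2^-1)| <= 2 * `|x - y|.
  apply: le_trans (clamp_lip _ _) _.
  rewrite (_ : 2 * x - 2^-1 - (2 * y - 2^-1) = 2 * (x - y)); last by ring.
  by rewrite normrM ger0_norm.
pose H t (_ : RR) := if cdist t <= 4^-1 then f (fun j => clamp (2 * t j - 2^-1))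
                     else g (clamp (-4 * cdist t + 2)).
apply: (loop_of_htpy (H := H) (s := 0)) => [|t s bt _||t ct]; rewrite /H.
- apply: cyl_cont_paste cyl_cont_cdist _ => [||t s [ct _] E].
  + apply: (cyl_cont_comp (G := fun u _ => f u)) cyl_cont_time _.
    * exact: cyl_cont_const_in_time.
    * exact: cyl_cont_lipschitz lip.
    * by move=> t s [ct us]; split=> // j; apply: unit_int_clamp.
  + exact/cyl_cont_along_path/cyl_cont_affine/cyl_cont_cdist.
  rewrite E (_ : -4 * 4^-1 + 2 = 1); last by field.
  rewrite (clamp_id unit_int1) bf //; split=> [j|]; first exact: unit_int_clamp.
  have [j /eqP] := cdist_eq_quarter E; rewrite eqr_norml => /andP[/orP[]/eqP hj _];
    exists j; (rewrite clamp_id; last by apply: inner_cube; rewrite E).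
  + by right; lra.
  + by left; lra.
- rewrite bdry_cdist // ifF; last by apply/negbTE; rewrite -ltNge; lra.
  by rewrite (_ : -4 * 2^-1 + 2 = 0) ?(clamp_id unit_int0) //; field.
- exact: unit_int0.
- rewrite /pathconj; case: ifP => h.
    by congr f; apply/funext => j; rewrite clamp_id //; apply: inner_cube.
  move/negbT: h; rewrite -ltNge => h.
  by rewrite clamp_id; [congr g; ring | rewrite (_ : _ + 2 = 2 - 4 * cdist t);
    [exact: outer_shell | ring]].
Qed.

(* Contract along [g]: at time [s] the shell follows [g] only up to [g s]. *)
Lemma homotopic_const_pathconj :
  homotopic d x0 (@const_loop X x0 n) (pathconj g (fun _ : T => g 1)).
Proof.
have [_ [g0 _]] := g_path; apply/homotopicP.
exists (fun t s => g (clamp (s * clamp (-4 * cdist t + 2)))); split.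
- apply/cyl_cont_along_path/cyl_cont_mul; first exact: cyl_cont_time.
  exact/cyl_cont_clamp/cyl_cont_affine/cyl_cont_cdist.
- move=> t s bt _; rewrite bdry_cdist // (_ : -4 * 2^-1 + 2 = 0); last by field.
  by rewrite (clamp_id unit_int0) mulr0 (clamp_id unit_int0) g0.
- by move=> t _; rewrite mul0r (clamp_id unit_int0) g0.
- move=> t ct; rewrite mul1r (clamp_id (unit_int_clamp _)) /pathconj.
  case: ifP => h; first by rewrite clamp_ge1 //; lra.
  move/negbT: h; rewrite -ltNge => h.
  by rewrite clamp_id; [congr g; ring | rewrite (_ : _ + 2 = 2 - 4 * cdist t);
    [exact: outer_shell | ring]].
Qed.

Lemma pathconj_const_close (f : T -> X) r : is_metric d -> 0 <= r ->
  (forall u, cube u -> d (g 1) (f u) <= r) ->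
  forall t : T, cube t -> d (pathconj g (fun _ => g 1) t) (pathconj g f t) <= r.
Proof.
move=> hm hr hf t ct; rewrite /pathconj; case: ifP => h; last by rewrite d_xx.
by apply: hf => j; apply: inner_cube.
Qed.

End PathConjugate.

Definition halfpow (k : nat) : RR := (2 ^+ k)^-1.

Lemma halfpow_gt0 k : 0 < halfpow k.
Proof. by rewrite invr_gt0 exprn_gt0. Qed.

Lemma halfpowS k : halfpow k.+1 = halfpow k / 2.
Proof. by rewrite /halfpow exprS invfM mulrC. Qed.

Lemma halfpow_le j k : (j <= k)%N -> halfpow k <= halfpow j.
Proof. by move=> jk; rewrite lef_pV2 ?posrE ?exprn_gt0 // ler_eXn2l // ltr1n. Qed.

Lemma halfpow_lt e : 0 < e -> exists k, halfpow k < e.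
Proof.
move=> he; exists (Num.bound e^-1).
rewrite /halfpow invf_plt ?posrE ?exprn_gt0 //; exact: upper_nthrootP.
Qed.

Section WellOrder.
Variables (T : eqType) (R : rel T) (R_wo : well_order R).

Lemma well_order_total : total R.
Proof. by move=> x y; apply: (wo_chainW (C := predT)) => // A _; exact: R_wo. Qed.

Lemma well_order_anti : antisymmetric R.
Proof. by move=> x y; apply: (wo_chain_antisymmetric (C := predT)) => // A _; exact: R_wo. Qed.

End WellOrder.

Section StoneCover.
Variables (X : Type) (d : X -> X -> RR) (d_metric : is_metric d).
Variables (r : RR) (r_gt0 : 0 < r) (R : rel {classic X}) (R_wo : well_order R).

Local Notation d_xx := (d_xx d_metric).
Local Notation d_sym := (d_sym d_metric).
Local Notation d_tri := (d_tri d_metric).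

Definition near_centers (x : X) : {pred {classic X}} := fun a => `[< d a x < r >].

Lemma exists_least_center x : exists z, minimum_of R (near_centers x) z.
Proof.
have hx : (x : {classic X}) \in near_centers x.
  by rewrite unfold_in; apply/asboolP; rewrite d_xx.
by have [z [h _]] := R_wo (ex_intro _ x hx); exists z.
Qed.

Definition least_center x : X := proj1_sig (cid (exists_least_center x)).

Lemma least_center_near x : d (least_center x) x < r.
Proof. by rewrite /least_center; case: cid => z [+ _] /=; rewrite unfold_in => /asboolP. Qed.

Lemma least_center_min x b : d b x < r -> R (least_center x) b.
Proof.
rewrite /least_center; case: cid => z [_ h] /= hb.
by apply: h; rewrite unfold_in; apply/asboolP.
Qed.

(* M. E. Rudin's proof of Stone's theorem.  A point x only feeds the cell of its
   least center (for the well-order R), which is what keeps distinct cells of the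
   same level 2^-k apart (cell_sep). *)
Definition cell_of (C : set X) (k : nat) (a : X) : set X :=
  [set y | exists x, [/\ least_center x = a, ~ C x,
     forall z, d x z < 3 * halfpow k -> d a z < r & d x y < halfpow k]].

Fixpoint cells_below (k : nat) : set X :=
  if k is k'.+1 then cells_below k' `|` [set y | exists a, cell_of (cells_below k') k' a y]
  else set0.

Definition cell (a : X) (k : nat) : set X := cell_of (cells_below k) k a.

Lemma d_open_cell a k : d_open d (cell a k).
Proof.
move=> y [x [h1 h2 h3 h4]]; exists (halfpow k - d x y) => [|w hw]; first by lra.
by exists x; split=> //; have := d_tri x y w; lra.
Qed.

Lemma cell_near_center a k y : cell a k y -> d a y < r.
Proof. by move=> [x [_ _ h3 h4]]; apply: h3; have := halfpow_gt0 k; lra. Qed.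

Lemma cells_belowP k y : cells_below k y <-> exists a j, (j < k)%N /\ cell a j y.
Proof.
split.
  elim: k => [//|k IH] /= [/IH[a [j [jk h]]]|[a h]]; last by exists a, k.
  by exists a, j; split=> //; apply: ltnW.
case=> a [j [+ h]]; elim: k => [//|k IH]; rewrite ltnS leq_eqVlt => /orP[/eqP jk|jk].
  by right; exists a; rewrite -jk.
by left; apply: IH.
Qed.

Lemma cell_cover x : exists a k, cell a k x.
Proof.
have h := least_center_near x.
have [k hk] : exists k, halfpow k < (r - d (least_center x) x) / 3.
  by apply: halfpow_lt; lra.
have [/cells_belowP[a [j [_ hj]]]|hc] := pselect (cells_below k x); first by exists a, j.
exists (least_center x), k, x; split=> //; last by rewrite d_xx halfpow_gt0.
by move=> z hz; have := d_tri (least_center x) x z; lra.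
Qed.

Lemma cell_sep a b k p q : a <> b -> cell a k p -> cell b k q -> halfpow k < d p q.
Proof.
wlog Rab : a b p q / R a b.
  move=> W nab hp hq; case/orP: (well_order_total R_wo a b) => [Rab|Rba].
    exact: W Rab nab hp hq.
  by rewrite d_sym; apply: W Rba _ hq hp => /esym.
move=> nab [y [ey ny bY py]] [z [ez nz bZ qz]].
have far : ~ d y z < 3 * halfpow k.
  move=> /bY h; apply: nab; apply: (well_order_anti R_wo); rewrite Rab /=.
  by rewrite -ez; apply: least_center_min.
have := d_tri y p z; have := d_tri p q z; rewrite (d_sym q z).
by move/negP: far; rewrite -leNgt; lra.
Qed.

Lemma cell_far a k x j : (forall w, d x w < halfpow j -> cell a k w) ->
  forall b i y, (k < i)%N -> cell b i y -> halfpow j <= d x y + halfpow i.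
Proof.
move=> hb b i y ki [z [_ nz _ zy]].
have far : ~ d x z < halfpow j.
  by move=> /hb h; apply: nz; apply/cells_belowP; exists a, k.
by have := d_tri x y z; rewrite (d_sym y z); move/negP: far; rewrite -leNgt; lra.
Qed.

Lemma cell_unique a b k x y y' rho : 2 * rho <= halfpow k ->
  cell a k y -> cell b k y' -> d x y < rho -> d x y' < rho -> a = b.
Proof.
move=> hrho hy hy' xy xy'; apply: contrapT => nab.
by have := cell_sep nab hy hy'; have := d_tri y x y'; rewrite (d_sym y x); lra.
Qed.

Lemma cell_locally_finite x : exists2 W, d_open d W /\ W x &
  finite_set [set A | (exists a k, A = cell a k) /\ (A `&` W) !=set0].
Proof.
have [a [k hx]] := cell_cover x.
have [e he hball] := d_open_cell hx.
have [j hj] := halfpow_lt he.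
set m := (k + j).+1; set W := [set y | d x y < halfpow m].
have hm : 2 * halfpow m = halfpow (k + j) by rewrite halfpowS; field.
exists W; first by split; [exact: d_open_ball | rewrite /W /= d_xx halfpow_gt0].
pose level_cell i : set X :=
  if pselect (exists b, (cell b i `&` W) !=set0) is left ex then cell (projT1 (cid ex)) i
  else set0.
apply: sub_finite_set (finite_image level_cell (finite_II m)).
move=> _ [[b [i ->]] [y [hy xy]]].
have im : (i < m)%N.
  rewrite ltnNge; apply/negP => mi.
  have ki : (k < i)%N by apply: leq_trans mi; rewrite ltnS leq_addr.
  have := cell_far (fun w hw => hball w (lt_trans hw hj)) ki hy.
  have := halfpow_le mi; have := halfpow_le (leq_addl k j); move: xy; rewrite /W /=; lra.
exists i => //; rewrite /level_cell; case: pselect => [ex|]; last by case; exists b, y.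
case: cid => b' [y' [hy' xy']] /=; congr cell.
by apply: cell_unique hy' hy xy' xy; rewrite hm; apply: halfpow_le; rewrite -ltnS.
Qed.

End StoneCover.

Lemma locally_finite_small_cover (X : Type) (d : X -> X -> RR) (x0 : X) r :
  is_metric d -> 0 < r -> exists U U0, cov d x0 U U0 /\
    forall A, U A -> exists z, forall y, A y -> d z y < r.
Proof.
move=> hm hr; have [R R_wo] := well_ordering_principle {classic X}.
pose U := [set A | exists a k, A = cell hm hr R_wo a k].
have [a [k hx0]] := cell_cover hm hr R_wo x0.
exists U, (cell hm hr R_wo a k); split; last first.
  by move=> _ [b [j ->]]; exists b => y; apply: cell_near_center.
split.
- by move=> _ [b [j ->]]; apply: d_open_cell.
- move=> x; have [b [j hx]] := cell_cover hm hr R_wo x.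
  by exists (cell hm hr R_wo b j); first exists b, j.
- exact: cell_locally_finite.
- by split => //; exists a, k.
Qed.

Section NearNullSubgroup.
Variables (X : Type) (d : X -> X -> RR) (x0 : X) (n : nat).
Hypothesis d_metric : is_metric d.
Variables (i : 'I_n) (first_coord_i : first_coord n = Some i).
Local Notation T := ('I_n -> RR).
Local Notation homotopic := (homotopic d x0).
Local Notation hclass := (hclass d x0).
Local Notation const := (@const_loop X x0 n).

Lemma loop_const : is_loop d x0 const.
Proof. by split=> // t ct e he; exists 1 => // t' _ _; rewrite /const_loop d_xx. Qed.

Lemma is_class_mulc (p q : set (T -> X)) :
  is_class d x0 p -> is_class d x0 q -> is_class d x0 (mulc d x0 p q).
Proof.
move=> [a la ->] [b lb ->]; rewrite (mulc_hclass first_coord_i la lb).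
by exists (concat a b) => //; exact: (loop_concat first_coord_i).
Qed.

Definition near_null (r : RR) : set (set (T -> X)) := fun s =>
  is_class d x0 s /\ exists a1 b1, [/\ homotopic const a1, s b1 &
     forall t, cube t -> d (a1 t) (b1 t) <= r].

Lemma subgroup_near_null r : 0 <= r -> subgroup d x0 (near_null r).
Proof.
move=> hr; split.
- split; first by exists const => //; exact: loop_const.
  exists const, const; split; try exact: homotopic_refl loop_const.
  by move=> t _; rewrite d_xx.
- move=> _ _ [[b lb ->] [a1 [b1 [h1 e1 p1]]]] [[b' lb' ->] [a2 [b2 [h2 e2 p2]]]].
  rewrite (mulc_hclass first_coord_i lb lb'); split.
    by exists (concat b b'); first exact: (loop_concat first_coord_i).
  exists (concat a1 a2), (concat b1 b2); split.
  + by rewrite -(concat_const _ first_coord_i); exact: (homotopic_concat first_coord_i).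
  + exact: (homotopic_concat first_coord_i).
  + exact: (concat_close first_coord_i).
- move=> _ [[b lb ->] [a1 [b1 [h1 e1 p1]]]].
  rewrite (invc_hclass first_coord_i lb); split.
    by exists (rev_loop b); first exact: (loop_rev first_coord_i).
  exists (rev_loop a1), (rev_loop b1); split.
  + by rewrite -(rev_const _ first_coord_i); exact: (homotopic_rev first_coord_i).
  + exact: (homotopic_rev first_coord_i).
  + exact: (rev_close first_coord_i).
Qed.

Lemma cube0 : cube (fun _ : 'I_n => 0 : RR).
Proof. by move=> j; exact: unit_int0. Qed.

(* A based map into a set of radius r / 2 stays within r of its basepoint. *)
Lemma span_gens_near_null U r : 0 <= r ->
  (forall A, U A -> exists z, forall y, A y -> d z y < r / 2) ->
  span_gens d x0 U `<=` near_null r.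
Proof.
move=> hr U_small _ [g [f [A [pg bf UA fA ->]]]].
split; first by exists (pathconj g f) => //; exact: loop_pathconj.
exists (pathconj g (fun _ => g 1)), (pathconj g f); split.
- exact: homotopic_const_pathconj.
- exact/homotopic_refl/loop_pathconj.
- apply: pathconj_const_close => // u cu; have [z hz] := U_small A UA.
  have -> : g 1 = f (fun _ => 0) by case: bf => _ ->; split; [exact: cube0 | exists i; left].
  have := hz _ (fA _ cu); have := hz _ (fA _ cube0).
  by have := d_tri d_metric (f (fun _ => 0)) z (f u); rewrite (d_sym d_metric _ z); lra.
Qed.

Lemma Span_near_null U r : 0 <= r ->
  (forall A, U A -> exists z, forall y, A y -> d z y < r / 2) ->
  Span d x0 U `<=` near_null r.
Proof.
move=> hr U_small s Ss; apply: Ss; first exact: span_gens_near_null.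
exact: subgroup_near_null.
Qed.

Lemma mu_ge0 (a b : T -> X) : 0 <= mu d a b.
Proof.
rewrite /mu; set E := [set d (a t) (b t) | t in @cube n].
have [h|/sup_out -> //] := pselect (has_sup E).
apply: le_trans (d_ge0 d_metric _ _) (sup_upper_bound h _).
by exists (fun _ => 0) => //; exact: cube0.
Qed.

Lemma mu_le (a b : T -> X) r : (forall t, cube t -> d (a t) (b t) <= r) -> mu d a b <= r.
Proof.
move=> h; apply: ge_sup => [|_ [t ct <-]]; last exact: h.
by exists (d (a (fun _ => 0)) (b (fun _ => 0))), (fun _ => 0) => //; exact: cube0.
Qed.

Lemma rho_le_mu (p q : set (T -> X)) a b : p a -> q b -> rho d p q <= mu d a b.
Proof.
move=> pa qb; apply: ge_inf; last by exists a => //; exists b.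
by exists 0 => _ [a' _ [b' _ <-]]; exact: mu_ge0.
Qed.

Lemma rho_mulc_near_null (a : T -> X) r s : is_loop d x0 a -> near_null r s ->
  rho d (hclass a) (mulc d x0 (hclass a) s) <= r.
Proof.
move=> la [[b lb ->] [a1 [b1 [h1 e1 p1]]]].
rewrite (mulc_hclass first_coord_i la lb).
have ha : homotopic a (concat a a1).
  apply: homotopic_trans (homotopic_sym (homotopic_concat_const first_coord_i la)) _.
  exact: (homotopic_concat first_coord_i (homotopic_refl la) h1).
apply: le_trans (rho_le_mu ha (homotopic_concat first_coord_i (homotopic_refl la) e1)) _.
have hr : 0 <= r := le_trans (d_ge0 d_metric _ _) (p1 _ cube0).
by apply: mu_le; apply: (concat_close first_coord_i) => // u _; rewrite d_xx.
Qed.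

Lemma coset_hclass_self U (a : T -> X) : is_loop d x0 a ->
  coset d x0 (hclass a) (Span d x0 U) (hclass a).
Proof.
move=> la; exists (onec d x0 (n := n)) => [S _ []//|].
rewrite /onec (mulc_hclass first_coord_i la loop_const).
exact/esym/hclass_homotopic/(homotopic_concat_const first_coord_i).
Qed.

End NearNullSubgroup.

Lemma first_coord_some n : (1 <= n)%N -> exists i : 'I_n, first_coord n = Some i.
Proof.
move=> n_gt0; rewrite /first_coord; case: pickP => [i _|h]; first by exists i.
by move: (h (Ordinal n_gt0)); rewrite /= eqxx.
Qed.

Theorem corollary5p12 (X : Type) (d : X -> X -> RR) (x0 : X) (n : nat) :
  is_metric d -> path_connected d -> (1 <= n)%N ->
  forall O : set (set (('I_n -> RR) -> X)),
    O `<=` is_class d x0 (n:=n) ->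
    rho_open d x0 O -> spanier_open d x0 O.
Proof.
move=> d_metric _ n_gt0 O O_class O_open _ /[dup] /O_class[a la ->] Oa.
have [i first_coord_i] := first_coord_some n_gt0.
have [e e_gt0 ball_e] := O_open _ Oa.
have e4_gt0 : 0 < e / 2 / 2 by lra.
have [U [U0 [cU U_small]]] := locally_finite_small_cover x0 d_metric e4_gt0.
have e2_ge0 : 0 <= e / 2 by lra.
have Span_small := Span_near_null d_metric first_coord_i e2_ge0 U_small.
exists U, U0, (hclass d x0 a); split=> //; first by exists a.
  exact: (coset_hclass_self d_metric first_coord_i _ la).
move=> _ [s /Span_small s_near ->]; apply: ball_e.
  by apply: (is_class_mulc first_coord_i); [exists a | case: s_near].
by apply: le_lt_trans (rho_mulc_near_null d_metric first_coord_i la s_near) _; lra.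
Qed.
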